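(* Let $d\ge 1$ and let $\varphi(x)$ be an $\mathcal L_d$-formula in the single free variable $x$ which is a finite conjunction of literals, each of the form $[t(x):p]$ or $\neg[t(x):p]$ with $p\in\mathbb H_d$ and $t(x)$ a term obtained from $x$ by applying finitely many function symbols $u_U$, $\pi_q$. If $\mathcal H_d\models\exists x\,\varphi(x)$, then $\mathcal V_d\models\exists x\,\varphi(x)$.
   Context: Notation. For $d\ge 1$, $\mathbb H_d$ is the set of complex linear subspaces of $\mathbb C^d$, ordered by inclusion $\le$, with $\top=\mathbb C^d$, $\bot=\{0\}$, $p^\bot$ the orthogonal complement, $p\wedge q=p\cap q$ and $p\vee q=p+q$. $\mathbb V_d\subseteq\mathbb H_d$ is the set of one-dimensional subspaces (rays). $\mathbb U_d$ is the set of unitary operators on $\mathbb C^d$, and for $U\in\mathbb U_d$, $p\in\mathbb H_d$, $U(p)=\{Uv: v\in p\}$. The Sasaki projection is $p\,\&\,q := q\cap(q^\bot+p)$; equivalently $p\,\&\,q=\{\Pi_q v: v\in p\}$ where $\Pi_q$ is the orthogonal projector onto $q$. Language $\mathcal L_d$: a first-order language without equality and without constants, having a unary function symbol $u_U$ for each $U\in\mathbb U_d$, a unary function symbol $\pi_q$ for each $q\in\mathbb H_d$, and a unary relation symbol $[\,\cdot:p]$ for each $p\in\mathbb H_d$. Hilbert model $\mathcal H_d$: the $\mathcal L_d$-structure with domain $\mathbb H_d$, $u_U^{\mathcal H_d}(x)=U(x)$, $\pi_q^{\mathcal H_d}(x)=x\,\&\,q$, and $[x:p]^{\mathcal H_d}$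 holds iff $x\le p$. Vector model $\mathcal V_d$: the $\mathcal L_d$-structure with domain $\mathbb V_d\cup\{\bot\}$ and the same formulas: $u_U^{\mathcal V_d}(x)=U(x)$, $\pi_q^{\mathcal V_d}(x)=x\,\&\,q$, $[x:p]^{\mathcal V_d}$ iff $x\le p$. *)

(* C^d is modelled as row vectors 'rV[R[i]]_d over the
   complex numbers R[i] built from an arbitrary real field R : realType. *)
From HB Require Import structures.
From mathcomp Require Import all_boot all_order all_algebra.
From mathcomp Require Import reals.
From mathcomp Require Import complex.
Set Implicit Arguments. Unset Strict Implicit. Unset Printing Implicit Defensive.
Import Order.TTheory GRing.Theory Num.Theory.
Local Open Scope ring_scope.

Section QL.
Variables (R : realType) (d : nat).
Local Notation C := R[i].
Local Notation vec := 'rV[C]_d.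

Definition subsp := {vspace vec}.

Definition cinner (v w : vec) : C := \sum_(k < d) v 0 k * conjc (w 0 k).

(* orthogonal complement: vectors orthogonal to every basis vector of p *)
Definition ortho_mx (p : subsp) : 'M[C]_(d, \dim p) :=
  \matrix_(k < d, i < \dim p) conjc ((vbasis p)`_i 0 k).
Definition perp (p : subsp) : subsp :=
  lker (linfun (fun v : vec => v *m ortho_mx p)).

Definition sasaki (p q : subsp) : subsp := (q :&: (perp q + p))%VS.

Definition adjmx (U : 'M[C]_d) : 'M[C]_d := (map_mx conjc U)^T.
Record unitary := Unitary { umx :> 'M[C]_d ; _ : umx *m adjmx umx = 1%:M }.

(* action of U on subspaces: U(p) = { U v | v in p }  (row-vector convention:
   the column vector U v corresponds to the row vector v *m U^T) *)
Definition uact (U : unitary) (p : subsp) : subsp :=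
  (linfun (fun v : vec => v *m (umx U)^T) @: p)%VS.

Inductive term :=
| TVar : term
| TU : unitary -> term -> term
| TPi : subsp -> term -> term.

Fixpoint eval_term (t : term) (x : subsp) : subsp :=
  match t with
  | TVar => x
  | TU U t' => uact U (eval_term t' x)
  | TPi q t' => sasaki (eval_term t' x) q
  end.

Record literal := Literal { lit_pos : bool ; lit_term : term ; lit_sub : subsp }.

Definition sat_lit (x : subsp) (l : literal) : Prop :=
  if lit_pos l then (eval_term (lit_term l) x <= lit_sub l)%VS
  else ~~ (eval_term (lit_term l) x <= lit_sub l)%VS.

Definition sat (x : subsp) (phi : seq literal) : Prop :=
  foldr (fun l P => sat_lit x l /\ P) True phi.

Definition H_models_ex (phi : seq literal) : Prop := exists x : subsp, sat x phi.

(* V_d |= exists x, phi(x): domain = rays together with bot, i.e. dim <= 1;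
   the interpretations of the symbols are the same maps restricted to it *)
Definition V_models_ex (phi : seq literal) : Prop :=
  exists x : subsp, (\dim x <= 1)%N /\ sat x phi.

End QL.

(* Every term t denotes the image of its argument under a linear map L_t,
   because the Sasaki projection x & q is the image of x under the orthogonal
   projector onto q.  A negative literal ~[t(x):p] therefore says that x is not
   contained in the subspace L_t^-1(p), while positive literals are preserved
   when x shrinks.  Since C is infinite, a subspace x that is contained in none
   of finitely many subspaces W_j has a vector v avoiding all of them, and the
   ray spanned by v satisfies the formula whenever x does. *)
From mathcomp Require Import all_boot all_order all_algebra.
From mathcomp Require Import reals complex.
From Stdlib Require Import Classical.
Set Implicit Arguments. Unset Strict Implicit. Unset Printing Implicit Defensive.
Import Order.TTheory GRing.Theory Num.Theory.
Local Open Scope ring_scope.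

Section ParallelProjection.
Variables (K : fieldType) (vT : vectType K) (q c : {vspace vT}).
Hypotheses (qc0 : (q :&: c = 0)%VS) (qcT : (q + c)%VS = fullv).

Lemma daddv_pi_addT w : daddv_pi q c w + daddv_pi c q w = w.
Proof. by apply: daddv_pi_add qc0 _; rewrite qcT memvf. Qed.

Lemma daddv_pi_compl0 v : v \in c -> daddv_pi q c v = 0.
Proof.
move=> cv; have cq0 : (c :&: q = 0)%VS by rewrite capvC.
have := daddv_pi_addT v; rewrite (daddv_pi_id cq0 cv).
by move/(canRL (addrK v)); rewrite subrr.
Qed.

Lemma memv_daddv_piC w : w - daddv_pi q c w \in c.
Proof. by rewrite -{1}(daddv_pi_addT w) addrAC subrr add0r memv_pi. Qed.

Lemma capv_addv_piE (p : {vspace vT}) :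
  (q :&: (c + p) = daddv_pi q c @: p)%VS.
Proof.
apply/vspaceP => w; apply/memv_capP/memv_imgP.
  move=> [qw /memv_addP [a ca [v pv defw]]]; exists v => //.
  by rewrite -(daddv_pi_id qc0 qw) defw linearD /= daddv_pi_compl0 ?add0r.
move=> [v pv ->]; split; first exact: memv_pi.
apply/memv_addP; exists (- (v - daddv_pi q c v)).
  by rewrite memvN memv_daddv_piC.
by exists v => //; rewrite opprB subrK.
Qed.

End ParallelProjection.

Section Avoidance.
Variables (K : numFieldType) (vT : vectType K).
Implicit Types (U W : {vspace vT}) (Ws : seq {vspace vT}).

Lemma exists_notin (S : seq K) : exists l, l \notin S.
Proof.
have le_sum x : x \in S -> `|x| <= \sum_(y <- S) `|y|.
  by move=> Sx; rewrite (big_rem _ Sx) /= lerDl sumr_ge0.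
exists (1 + \sum_(y <- S) `|y|); apply/negP => /le_sum.
by rewrite ger0_norm ?addr_ge0 ?sumr_ge0 // gerDr ler10.
Qed.

(* Two points of the line u + K w lying in W would put w, and then u, in W. *)
Lemma line_meets_vspace_once W (u w : vT) : u \notin W ->
  exists l0 : K, forall l, l != l0 -> u + l *: w \notin W.
Proof.
move=> Wu; have [[l0 Wl0] | noW] := classic (exists l0 : K, u + l0 *: w \in W);
  last by exists 0 => l _; apply/negP => Wl; apply: noW; exists l.
exists l0 => l nl0; apply/negP => Wl.
have Ww : w \in W.
  have := memvB Wl Wl0; rewrite opprD addrACA subrr add0r -scalerBl => Wdw.
  by rewrite -[w](scalerK (a := l - l0)) ?subr_eq0 // memvZ.
by move: Wu; rewrite -[u](addrK (l *: w)) memvB // memvZ.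
Qed.

Lemma line_avoids_vspaces Ws (u w : vT) :
  (forall W, W \in Ws -> u \notin W) ->
  exists S : seq K,
    forall l, l \notin S -> forall W, W \in Ws -> u + l *: w \notin W.
Proof.
elim: Ws => [|W Ws IH] Wsu; first by exists [::].
have [S avS] := IH (fun W' WsW' => Wsu W' (@mem_behead _ (W :: Ws) W' WsW')).
have [l0 avW] := line_meets_vspace_once w (Wsu W (mem_head _ _)).
exists (l0 :: S) => l; rewrite in_cons negb_or => /andP[nl0 nlS] W'.
by rewrite in_cons => /orP[/eqP -> | /avS]; [exact: avW | exact].
Qed.

Lemma vspace_avoid U Ws : (forall W, W \in Ws -> ~~ (U <= W)%VS) ->
  exists2 v, v \in U & forall W, W \in Ws -> v \notin W.
Proof.
elim: Ws => [|W Ws IH] nUWs; first by exists 0; rewrite ?mem0v.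
have [u Uu avu] :=
  IH (fun W' WsW' => nUWs W' (@mem_behead _ (W :: Ws) W' WsW')).
have [Wu | nWu] := boolP (u \in W); last first.
  by exists u => // W'; rewrite in_cons => /orP[/eqP -> | /avu].
have /subvPn[w Uw nWw] := nUWs W (mem_head _ _).
have [S avS] := line_avoids_vspaces w avu.
have [l] := exists_notin (0 :: S); rewrite in_cons negb_or => /andP[l0 lS].
exists (u + l *: w); first by rewrite memvD ?memvZ.
move=> W'; rewrite in_cons => /orP[/eqP -> | /avS]; last exact.
apply: contra nWw => Wv; rewrite -[w](scalerK l0) memvZ //.
by rewrite -[l *: w](addKr u) memvD ?memvN.
Qed.

End Avoidance.

Section QuantumLogic.
Variables (R : realType) (d : nat).
Local Notation C := R[i].
Local Notation vec := 'rV[C]_d.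
Local Notation subsp := (subsp R d).

Lemma cinner_sumr (v : vec) n (c : 'I_n -> C) (w : 'I_n -> vec) :
  cinner v (\sum_(i < n) c i *: w i) =
  \sum_(i < n) conjc (c i) * cinner v (w i).
Proof.
rewrite /cinner; under eq_bigr => k _ do rewrite summxE rmorph_sum mulr_sumr.
rewrite exchange_big; apply: eq_bigr => i _; rewrite mulr_sumr.
by apply: eq_bigr => k _; rewrite !mxE rmorphM mulrCA.
Qed.

Lemma cinner_perp (q : subsp) v (i : 'I_(\dim q)) :
  v \in perp q -> cinner v (vbasis q)`_i = 0.
Proof.
rewrite /perp memv_ker (lfunE (mulmxr (ortho_mx q))) /=.
move=> /eqP/matrixP/(_ 0 i); rewrite !mxE => <-.
by apply: eq_bigr => k _; rewrite mxE.
Qed.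

Lemma cinner_self_eq0 (v : vec) : (cinner v v == 0) = (v == 0).
Proof.
apply/idP/eqP => [|->]; last first.
  by rewrite /cinner big1 // => k _; rewrite mxE mul0r.
rewrite psumr_eq0 => [/allP vv0|k _]; last exact: mulcJ_ge0.
apply/rowP => k; have /implyP/(_ isT) := vv0 k (mem_index_enum _).
by rewrite !mxE mulf_eq0 conjc_eq0 orbb => /eqP.
Qed.

Lemma capv_perp (q : subsp) : (q :&: perp q = 0)%VS.
Proof.
apply/eqP; rewrite -subv0; apply/subvP => v /memv_capP[qv pv].
rewrite memv0 -cinner_self_eq0 {2}(coord_vbasis qv) cinner_sumr.
by rewrite big1 // => i _; rewrite cinner_perp ?mulr0.
Qed.

Lemma dim_perp (q : subsp) : (d <= \dim q + \dim (perp q))%N.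
Proof.
pose f : 'Hom(vec, 'rV[C]_(\dim q)) := linfun (fun v : vec => v *m ortho_mx q).
have := limg_ker_dim f fullv; rewrite capfv dimvf /dim /= mul1n -/f => dimf.
have := dimvS (subvf (f @: fullv)); rewrite dimvf /dim /= mul1n => dim_img.
by rewrite -{1}dimf addnC leq_add2r.
Qed.

Lemma addv_perp (q : subsp) : (q + perp q)%VS = fullv.
Proof.
apply/eqP; rewrite eqEdim subvf dimv_disjoint_sum ?capv_perp //.
by rewrite dimvf /dim /= mul1n dim_perp.
Qed.

Definition orthoproj (q : subsp) : 'End(vec) := daddv_pi q (perp q).

Lemma sasakiE (p q : subsp) : sasaki p q = (orthoproj q @: p)%VS.
Proof. exact: capv_addv_piE (capv_perp q) (addv_perp q) p. Qed.

Fixpoint term_lfun (t : term R d) : 'End(vec) :=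
  match t with
  | TVar => \1%VF
  | TU U t' => (linfun (fun v : vec => v *m (umx U)^T) \o term_lfun t')%VF
  | TPi q t' => (orthoproj q \o term_lfun t')%VF
  end.

Lemma eval_termE t x : eval_term t x = (term_lfun t @: x)%VS.
Proof.
elim: t => [|U t IH|q t IH] /=; first by rewrite lim1g.
  by rewrite IH /uact limg_comp.
by rewrite IH sasakiE limg_comp.
Qed.

Definition neg_preimages (phi : seq (literal R d)) : seq subsp :=
  [seq (term_lfun (lit_term l) @^-1: lit_sub l)%VS | l <- phi & ~~ lit_pos l].

Lemma sat_neg_preimages (x : subsp) phi : sat x phi ->
  forall W, W \in neg_preimages phi -> ~~ (x <= W)%VS.
Proof.
elim: phi => [|l phi IH] //= [satl satphi] W.
rewrite /neg_preimages /=; case: ifP => [npos | _]; last exact: IH.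
rewrite in_cons => /orP[/eqP -> | /IH]; last exact.
move: satl; rewrite /sat_lit (negPf npos) eval_termE.
move=> /subvPn[_ /memv_imgP[u xu ->] nWu].
by apply/subvPn; exists u; rewrite // -memv_preim.
Qed.

Lemma sat_line (x : subsp) phi v : v \in x ->
  (forall W, W \in neg_preimages phi -> v \notin W) ->
  sat x phi -> sat <[v]>%VS phi.
Proof.
move=> xv; elim: phi => [|l phi IH] //= avv [satl satphi].
have avphi W : W \in neg_preimages phi -> v \notin W.
  move=> W_in; apply: avv; rewrite /neg_preimages /=.
  by case: ifP; rewrite ?in_cons W_in ?orbT.
split; last exact: IH.
move: satl avv; rewrite /sat_lit /neg_preimages /= !eval_termE.
case: (lit_pos l) => /= satl avv.
  by apply: subv_trans satl; apply: limgS; rewrite -memvE.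
by rewrite limg_line -memvE memv_preim avv ?mem_head.
Qed.

End QuantumLogic.

Theorem mainTheorem5 (R : realType) (d : nat) (hd : (0 < d)%N)
  (phi : seq (literal R d)) :
  H_models_ex phi -> V_models_ex phi.
Proof.
move=> [x satx].
have [v xv avv] := vspace_avoid (sat_neg_preimages satx).
exists <[v]>%VS; split; first by rewrite dim_vline leq_b1.
exact: sat_line xv avv satx.
Qed.
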